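(* Let $m\geq 2$ and $n\geq 2$ be integers, let $G_m$ be a graph of order $m$ and $K_n$ the complete graph of order $n$. Then $rvcl(G_m\diamond K_n)\geq n+1$.
   Context: All graphs are finite, simple, connected and undirected; $d$ denotes graph distance. A rainbow vertex $k$-coloring of $G$ is a map $c:V(G)\to\{1,\dots,k\}$ such that every two vertices are joined by a path whose internal vertices all receive distinct colors. For such $c$ let $R_i=c^{-1}(i)$; the rainbow code of $v$ is $(d(v,R_1),\dots,d(v,R_k))$ with $d(v,R_i)=\min_{x\in R_i}d(v,x)$. A locating rainbow $k$-coloring is a rainbow vertex $k$-coloring in which distinct vertices have distinct rainbow codes; $rvcl(G)$ is the least $k$ for which one exists. For graphs $G_m$ (order $m$) and $H_n$ (order $n$) on disjoint vertex sets, the edge corona $G_m\diamond H_n$ is obtained from one copy of $G_m$ and $|E(G_m)|$ vertex-disjoint copies of $H_n$, one per edge of $G_m$, by joining both end vertices of the $j$-th edge of $G_m$ to every vertex of the $j$-th copy of $H_n$. *)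

From mathcomp Require Import all_boot.
Set Implicit Arguments. Unset Strict Implicit. Unset Printing Implicit Defensive.

(* A finite simple graph: vertex type T : finType with adjacency e : rel T,
   assumed symmetric and irreflexive (hypotheses of the theorem). *)

Section Graphs.
Variable T : finType.
Variable e : rel T.

Fixpoint ball (x : T) (k : nat) : {set T} :=
  match k with
  | 0 => [set x]
  | k'.+1 => ball x k' :|: [set z | [exists w in ball x k', e w z]]
  end.

(* graph distance d(x,y): least k with y in ball x k
   (equals #|T| if y is unreachable, which never happens in a connected graph) *)
Definition dist (x y : T) : nat := find (fun k => y \in ball x k) (iota 0 #|T|).

(* internal vertices of the walk x :: p *)
Definition internal (x : T) (p : seq T) : seq T := behead (belast x p).

Definition rainbow_vertex_coloring (k : nat) (c : T -> 'I_k) : Prop :=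
  forall x y : T, x != y ->
    exists p : seq T, [/\ path e x p, last x p = y, uniq (x :: p)
                        & uniq (map c (internal x p))].

Definition dist_class (k : nat) (c : T -> 'I_k) (v : T) (i : 'I_k) : nat :=
  \big[minn/#|T|]_(x | c x == i) dist v x.

Definition rainbow_code (k : nat) (c : T -> 'I_k) (v : T) : {ffun 'I_k -> nat} :=
  [ffun i => dist_class c v i].

(* every colour class R_i is nonempty (so the code is defined) and distinct
   vertices have distinct rainbow codes *)
Definition locating_rainbow_coloring (k : nat) (c : T -> 'I_k) : Prop :=
  [/\ rainbow_vertex_coloring c,
      (forall i : 'I_k, exists x, c x = i)
    & injective (rainbow_code c)].

End Graphs.

Section EdgeCorona.
Variables (T : finType) (e : rel T) (U : finType) (h : rel U).

Definition is_edge (A : {set T}) : bool :=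
  [exists x, exists y, e x y && (A == [set x; y])].

Definition edge := {A : {set T} | is_edge A}.

Definition ecV := (T + (edge * U))%type.

Definition ecorona_rel (a b : ecV) : bool :=
  match a, b with
  | inl x, inl y => e x y
  | inr (j, u), inr (j', v) => (j == j') && h u v
  | inl x, inr (j, _) => x \in val j
  | inr (j, _), inl x => x \in val j
  end.

End EdgeCorona.

Definition complete (n : nat) : rel 'I_n := fun u v => u != v.

(* The n vertices of the copy of K_n attached to an edge xy are pairwise true
   twins (they have the same closed neighbourhood), so they are at the same
   distance from every other vertex; a locating colouring must therefore give
   them n distinct colours, whence k >= n.  If k = n, this copy carries every
   colour, so both the endpoint x and the copy vertex w coloured like x see
   every colour other than their own at distance 1: x and w then share the
   rainbow code (0 at their colour, 1 elsewhere), a contradiction. *)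
From mathcomp Require Import all_boot all_order.

Set Implicit Arguments.
Unset Strict Implicit.
Unset Printing Implicit Defensive.

Import Order.TTheory.

Section Distances.
Variables (V : finType) (r : rel V).

Lemma mem_ball1 x z : (z \in ball r x 1) = (z == x) || r x z.
Proof.
rewrite /= in_setU in_set1 in_set; congr orb.
apply/existsP/idP => [[w /andP[/set1P -> //]] | rxz].
by exists x; rewrite in_set1 eqxx.
Qed.

Lemma dist_self x : dist r x x = 0.
Proof.
rewrite /dist; have: 0 < #|V| by apply/card_gt0P; exists x.
by case: #|V| => //= N _; rewrite in_set1 eqxx.
Qed.

Lemma dist_gt0 x y : x != y -> 0 < dist r x y.
Proof.
move=> neq_xy; rewrite /dist; have: 0 < #|V| by apply/card_gt0P; exists x.
by case: #|V| => //= N _; rewrite in_set1 eq_sym (negbTE neq_xy).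
Qed.

Lemma dist_adj x y : irreflexive r -> r x y -> dist r x y = 1.
Proof.
move=> irr_r rxy.
have neq_xy : x != y by apply: contraTneq rxy => ->; rewrite irr_r.
have: 1 < #|V| by apply/card_gt1P; exists x, y.
rewrite /dist; case: #|V| => [|[|N]] // _.
by rewrite /= in_set1 eq_sym (negbTE neq_xy) -[_ \in _]/(y \in ball r x 1)
  mem_ball1 rxy orbT.
Qed.

(* Twins at distance 1 stay indistinguishable at every larger radius. *)
Lemma dist_twin a b x : ball r a 1 = ball r b 1 -> x != a -> x != b ->
  dist r a x = dist r b x.
Proof.
move=> twin_ab neq_xa neq_xb.
have ballS k : ball r a k.+1 = ball r b k.+1.
  by elim: k => [|k /= ->].
rewrite /dist; apply: eq_find => -[|k]; last by rewrite ballS.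
by rewrite /= !in_set1 (negbTE neq_xa) (negbTE neq_xb).
Qed.

End Distances.

Section RainbowCodes.
Variables (V : finType) (r : rel V) (k : nat) (c : V -> 'I_k).

Lemma dist_class_le v x : dist_class r c v (c x) <= dist r v x.
Proof.
exact: (@bigmin_le_cond _ nat _ _ x (fun y => c y == c x) _ (eqxx _)).
Qed.

Lemma dist_class_self v : dist_class r c v (c v) = 0.
Proof. by apply/eqP; rewrite -leqn0 -(dist_self r v) dist_class_le. Qed.

Lemma dist_class_adj v w : irreflexive r -> r v w -> c v != c w ->
  dist_class r c v (c w) = 1.
Proof.
move=> irr_r rvw neq_cvw; apply/eqP; rewrite eqn_leq.
rewrite -[X in _ <= X](dist_adj irr_r rvw) dist_class_le /=.
apply: (@le_bigmin _ nat) => [|x /eqP cx]; first by apply/card_gt0P; exists v.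
by apply: dist_gt0; apply: contra_neq neq_cvw => ->; rewrite cx.
Qed.

Lemma rainbow_code_twin a b : ball r a 1 = ball r b 1 -> c a = c b ->
  rainbow_code r c a = rainbow_code r c b.
Proof.
move=> twin_ab eq_cab; apply/ffunP => i; rewrite !ffunE.
have [-> | neq_i] := eqVneq i (c a).
  by rewrite {2}eq_cab !dist_class_self.
apply: eq_bigr => x /eqP cx.
by apply: dist_twin twin_ab _ _; apply: contra_neq neq_i => eq_x;
  rewrite -cx eq_x eq_cab.
Qed.

Definition sees_all_colours v :=
  forall i, c v != i -> exists2 w, r v w & c w = i.

Lemma rainbow_code_colourful v : irreflexive r -> sees_all_colours v ->
  rainbow_code r c v = [ffun i => (c v != i) : nat].
Proof.
move=> irr_r colourful; apply/ffunP => i; rewrite !ffunE.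
have [<- | neq_i] := eqVneq (c v) i; first exact: dist_class_self.
have [w rvw cw] := colourful i neq_i.
by rewrite -cw dist_class_adj // cw neq_i.
Qed.

Hypothesis code_inj : injective (rainbow_code r c).

Lemma locating_twin_colours a b :
  ball r a 1 = ball r b 1 -> a != b -> c a != c b.
Proof.
by move=> twin_ab; apply: contra_neq => /(rainbow_code_twin twin_ab)/code_inj.
Qed.

Lemma locating_colourful_eq a b : irreflexive r ->
  sees_all_colours a -> sees_all_colours b -> c a = c b -> a = b.
Proof.
move=> irr_r col_a col_b eq_cab; apply: code_inj.
by rewrite !rainbow_code_colourful // eq_cab.
Qed.

End RainbowCodes.

Lemma connected_exists_edge (T : finType) (e : rel T) :
  1 < #|T| -> (forall x y, connect e x y) -> exists x y, e x y.
Proof.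
case/card_gt1P => x [y [_ _ neq_xy]] connected.
case/connectP: (connected x y) => -[|z p] /=.
  by move=> _ eq_xy; rewrite eq_xy eqxx in neq_xy.
by case/andP=> exz _ _; exists x, z.
Qed.

Section EdgeCoronaComplete.
Variables (T : finType) (e : rel T) (n : nat).

Local Notation ec := (@ecorona_rel T e _ (@complete n)).

Lemma is_edge_pair x y : e x y -> is_edge e [set x; y].
Proof.
by move=> exy; apply/existsP; exists x; apply/existsP; exists y; rewrite exy eqxx.
Qed.

Lemma ecorona_complete_irreflexive : irreflexive e -> irreflexive ec.
Proof.
by move=> irr_e [x | [j u]] /=; [exact: irr_e | rewrite eqxx /complete eqxx].
Qed.

Lemma ecorona_complete_twins (j : edge e) u v :
  ball ec (inr (j, u)) 1 = ball ec (inr (j, v)) 1.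
Proof.
have mem_copy u' j' w : (inr (j', w) \in ball ec (inr (j, u')) 1) = (j == j').
  rewrite mem_ball1 /=; have [<- | neq_j] := eqVneq j j'.
    rewrite /complete; case: (eqVneq u' w) => [-> | _] /=;
    by rewrite ?eqxx ?orbT.
  by rewrite orbF; apply: contraNF neq_j => /eqP[-> _].
by apply/setP => -[x | [j' w]]; rewrite ?mem_copy // !mem_ball1.
Qed.

Lemma ecorona_copy_colourful k (c : ecV e 'I_n -> 'I_k) (j : edge e) a :
  (forall i, exists u, c (inr (j, u)) = i) ->
  (forall u, c a != c (inr (j, u)) -> ec a (inr (j, u))) ->
  sees_all_colours ec c a.
Proof.
move=> copy_onto adj_copy i neq_i; have [u cu] := copy_onto i.
by exists (inr (j, u)); rewrite // adj_copy // cu.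
Qed.

End EdgeCoronaComplete.

Theorem lemma4 (m n : nat) (T : finType) (e : rel T)
  (Hsym : symmetric e) (Hirr : irreflexive e)
  (Hconn : forall x y : T, connect e x y)
  (Hm : 2 <= m) (Hn : 2 <= n) (HT : #|T| = m)
  (k : nat) (c : ecV e 'I_n -> 'I_k) :
  locating_rainbow_coloring (@ecorona_rel T e _ (@complete n)) c -> n.+1 <= k.
Proof.
move=> [_ _ code_inj].
have [x [y exy]] : exists x y, e x y.
  by apply: connected_exists_edge; rewrite ?HT.
pose j : edge e := Sub [set x; y] (is_edge_pair exy).
have copy_colour_inj : injective (fun u => c (inr (j, u))).
  move=> u v /eqP; apply: contraTeq => neq_uv.
  apply: (locating_twin_colours code_inj (ecorona_complete_twins j u v)).
  by apply: contra_neq neq_uv => -[].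
rewrite ltnNge; apply/negP => le_kn.
have copy_onto i : exists u, c (inr (j, u)) = i.
  have card_le : #|'I_k| <= #|'I_n| by rewrite !card_ord.
  by have /codomP[u ->] := inj_card_onto copy_colour_inj card_le i; exists u.
have [u0 cu0] := copy_onto (c (inl x)).
suff: inl x = inr (j, u0) :> ecV e 'I_n by [].
have irr_ec := ecorona_complete_irreflexive (n := n) Hirr.
apply: (locating_colourful_eq code_inj irr_ec) (esym cu0).
- by apply: (ecorona_copy_colourful copy_onto) => u _; rewrite /= set21.
- apply: (ecorona_copy_colourful copy_onto) => u; rewrite /= eqxx /complete.
  by apply: contra_neq => ->.
Qed.
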